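(* Consider a finite set of users $\mathcal{I}$, a finite set of time periods $\mathcal{T}$, and a finite set of types $\mathcal{K}=\{1,\dots,K\}$. Each user $i$ has deterministic demand $D_i^t\ge 0$ in period $t$ and belongs to exactly one type $k\in\mathcal{K}$, in which case his value of lost load is $V_i^t=V_k^t$; assume $V_1^t\le V_2^t\le\cdots\le V_K^t$ for every $t$. Let $D_a^t=\sum_{i\in\mathcal{I}}D_i^t>0$. Fix a renewable capacity $r\ge 0$ and random variables $\Theta^t$ supported in $[0,1]$; let $s^t=\min(D_a^t, r\Theta^t)$ and $d_i^t=\frac{D_i^t}{D_a^t}s^t$. Fix a price $p$ with $p\le V_1^t$ for all $t$. A contract assigns to each type $k$ premium fees $(\pi_k^t)_{t\in\mathcal{T}}$; a user $i$ choosing contract item $o\in\mathcal{K}$ has cost $$CU_i(o)=\sum_{t}\pi_o^tD_i^t+\sum_t p\,\mathbb{E}[d_i^t]+\sum_t\mathbb{E}[V_i^t(D_i^t-d_i^t)]-\sum_t\mathbb{E}[(V_o^t-p)(D_i^t-d_i^t)],$$ and a user buying no insurance has cost $CU_i(0)=\sum_t p\,\mathbb{E}[d_i^t]+\sum_t\mathbb{E}[V_i^t(D_i^t-d_i^t)]$. Suppose the premium fees satisfy $$\pi_k^t-\pi_m^t=(V_k^t-V_m^t)\,\mathbb{E}\Big[1-\frac{s^t}{D_a^t}\Big]\quad\forall t\in\mathcal{T},\ \forall m,k\in\mathcal{K},$$ $$0\le \pi_k^t\le (V_k^t-p)\,\mathbb{E}\Big[1-\frac{s^t}{D_a^t}\Big]\quad\forall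 t\in\mathcal{T},\ \forall k\in\mathcal{K}.$$ Then the contract is valid: for every user $i$ of type $k$, $CU_i(k)\le CU_i(0)$ (individual rationality) and $CU_i(k)\le CU_i(m)$ for all $m\in\mathcal{K}$ (incentive compatibility). Moreover, premium fees satisfying both displayed conditions always exist.
   Context: A contract is called valid if it satisfies Individual Rationality (each user of type $k$ weakly prefers the type-$k$ contract item to not purchasing insurance, i.e. $CU_i(k)\le CU_i(0)$) and Incentive Compatibility (each user of type $k$ weakly prefers the type-$k$ item to any other item $m$, i.e. $CU_i(k)\le CU_i(m)$). The expectation is over $\Theta^t$. *)

From HB Require Import structures.
From mathcomp Require Import all_boot all_order all_algebra.
From mathcomp Require Import all_classical all_reals all_analysis.
Set Implicit Arguments. Unset Strict Implicit. Unset Printing Implicit Defensive.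
Import Order.TTheory GRing.Theory Num.Theory.
Local Open Scope ring_scope.

(* Real-valued expectation over the probability space P:
   E[X] := fine (E_P[X]). All integrands used below are bounded and
   measurable, hence integrable, so this is the usual expectation. *)
Definition Ex {d} {T : measurableType d} {R : realType}
  (P : probability T R) (X : T -> R) : R := fine ('E_P[X])%E.

Section Model.
Context {d : measure_display} {T : measurableType d} {R : realType}
  (P : probability T R) {I Tt : finType} {K : nat}.
Variables (D : I -> Tt -> R) (typ : I -> 'I_K) (V : 'I_K -> Tt -> R)
  (r p : R) (Theta : Tt -> T -> R).

Definition Dagg (t : Tt) : R := \sum_(i : I) D i t.
Definition supply (t : Tt) (w : T) : R := Num.min (Dagg t) (r * Theta t w).
Definition served (i : I) (t : Tt) (w : T) : R := D i t / Dagg t * supply t w.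
Definition VoLL (i : I) (t : Tt) : R := V (typ i) t.

Definition CU (pi : 'I_K -> Tt -> R) (i : I) (o : 'I_K) : R :=
  \sum_(t : Tt) pi o t * D i t
  + \sum_(t : Tt) p * Ex P (served i t)
  + \sum_(t : Tt) Ex P (fun w => VoLL i t * (D i t - served i t w))
  - \sum_(t : Tt) Ex P (fun w => (V o t - p) * (D i t - served i t w)).

Definition CU0 (i : I) : R :=
  \sum_(t : Tt) p * Ex P (served i t)
  + \sum_(t : Tt) Ex P (fun w => VoLL i t * (D i t - served i t w)).

Definition premium_conditions (pi : 'I_K -> Tt -> R) : Prop :=
  (forall (t : Tt) (m k : 'I_K),
      pi k t - pi m t = (V k t - V m t) * Ex P (fun w => 1 - supply t w / Dagg t))
  /\ (forall (t : Tt) (k : 'I_K),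
      0 <= pi k t /\ pi k t <= (V k t - p) * Ex P (fun w => 1 - supply t w / Dagg t)).

Definition valid_contract (pi : 'I_K -> Tt -> R) : Prop :=
  forall i : I, CU pi i (typ i) <= CU0 i /\ forall m : 'I_K, CU pi i (typ i) <= CU pi i m.
End Model.

From HB Require Import structures.
From mathcomp Require Import all_boot all_order all_algebra.
From mathcomp Require Import all_classical all_reals all_analysis.
From mathcomp Require Import ring lra measurable_realfun.
Set Implicit Arguments. Unset Strict Implicit. Unset Printing Implicit Defensive.
Import Order.TTheory GRing.Theory Num.Theory.
Local Open Scope ring_scope.

(* Since d_i^t = (D_i^t / D_a^t) s^t, the compensation term of
   CU_i(o) is linear in the same random variable 1 - s^t / D_a^t for every
   user, so CU_i(o) = CU_i(0) + sum_t D_i^t (pi_o^t - (V_o^t - p) E[1 - s^t/D_a^t]).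
   The first premium condition makes the bracket independent of o (so
   incentive compatibility holds with equality), the second makes it
   nonpositive (individual rationality); pi_k^t = (V_k^t - V_1^t) E[1 - s^t/D_a^t]
   satisfies both. *)

Section Expectation.
Context {d : measure_display} {T : measurableType d} {R : realType}
  (P : probability T R).

Lemma Ex_ge0 (f : T -> R) : (forall w, 0 <= f w) -> 0 <= Ex P f.
Proof. by move=> f0; apply/fine_ge0/expectation_ge0. Qed.

Lemma Ex_scale (f : T -> R) (c : R) :
  f \in Lfun P 1 -> Ex P (fun w => c * f w) = c * Ex P f.
Proof.
move=> f1; have -> : (fun w => c * f w) = c \o* f.
  by apply/funext => w; rewrite /= mulrC.
by rewrite /Ex expectationZl // fineM //; exact: expectation_fin_num.
Qed.

Lemma bounded_Lfun1 (f : T -> R) (M : R) :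
  measurable_fun setT f -> (forall w, `|f w| <= M) -> f \in Lfun P 1.
Proof.
move=> mf fM; apply/Lfun1_integrable/measurable_bounded_integrable => //.
  exact: le_lt_trans (probability_le1 _ _) (ltry 1).
exists M; split; first exact: num_real.
by move=> N MN w _; exact: le_trans (fM w) (ltW MN).
Qed.

End Expectation.

Section Contract.
Context {d : measure_display} {T : measurableType d} {R : realType}
  (P : probability T R) {I Tt : finType} {K : nat}.
Variables (D : I -> Tt -> R) (typ : I -> 'I_K) (V : 'I_K -> Tt -> R)
  (r p : R) (Theta : Tt -> T -> R).
Hypotheses (hDa : forall t, 0 < Dagg D t) (hr : 0 <= r)
  (hTheta_meas : forall t, measurable_fun setT (Theta t))
  (hTheta_01 : forall t w, 0 <= Theta t w <= 1).

Definition lost_frac (t : Tt) (w : T) : R := 1 - supply D r Theta t w / Dagg D t.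

Definition exp_lost_frac (t : Tt) : R := Ex P (lost_frac t).

Lemma supply_ge0 t w : 0 <= supply D r Theta t w.
Proof.
have /andP[T0 _] := hTheta_01 t w.
by rewrite /supply le_min (ltW (hDa t)) mulr_ge0.
Qed.

Lemma supply_le_Dagg t w : supply D r Theta t w <= Dagg D t.
Proof. by rewrite /supply ge_min lexx. Qed.

Lemma lost_frac_ge0 t w : 0 <= lost_frac t w.
Proof. by rewrite subr_ge0 ler_pdivrMr // mul1r supply_le_Dagg. Qed.

Lemma lost_frac_le1 t w : lost_frac t w <= 1.
Proof. by rewrite gerBl divr_ge0 ?supply_ge0 // ltW. Qed.

Lemma measurable_lost_frac t : measurable_fun setT (lost_frac t).
Proof.
apply: measurable_funB; first exact: measurable_cst.
apply: measurable_funM; last exact: measurable_cst.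
exact: measurable_minr (measurable_cst _)
         (measurable_funM (measurable_cst _) (hTheta_meas t)).
Qed.

Lemma exp_lost_frac_ge0 t : 0 <= exp_lost_frac t.
Proof. exact/Ex_ge0/lost_frac_ge0. Qed.

Lemma unserved_demandE i t w :
  D i t - served D r Theta i t w = D i t * lost_frac t w.
Proof. by rewrite /served /lost_frac; ring. Qed.

Lemma Ex_compensation i (o : 'I_K) t :
  Ex P (fun w => (V o t - p) * (D i t - served D r Theta i t w)) =
  (V o t - p) * D i t * exp_lost_frac t.
Proof.
under eq_fun do rewrite unserved_demandE mulrA.
rewrite Ex_scale //; apply: (bounded_Lfun1 P (M := 1) (measurable_lost_frac t)) => w.
by rewrite ger0_norm ?lost_frac_le1 ?lost_frac_ge0.
Qed.

Definition premium_margin (pi : 'I_K -> Tt -> R) (o : 'I_K) (t : Tt) : R :=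
  pi o t - (V o t - p) * exp_lost_frac t.

Lemma CU_margin pi i o :
  CU P D typ V r p Theta pi i o =
  CU0 P D typ V r p Theta i + \sum_t D i t * premium_margin pi o t.
Proof.
rewrite /CU /CU0 (eq_bigr _ (fun t _ => Ex_compensation i o t)).
under [X in _ = _ + X]eq_bigr do rewrite /premium_margin mulrBr.
rewrite sumrB; under [X in _ = _ + (X - _)]eq_bigr do rewrite mulrC.
under [X in _ = _ + (_ - X)]eq_bigr do rewrite mulrCA mulrA.
ring.
Qed.

Section Conditions.
Variable pi : 'I_K -> Tt -> R.
Hypothesis hpi : premium_conditions P D V r p Theta pi.

Lemma premium_margin_indep t (m k : 'I_K) :
  premium_margin pi k t = premium_margin pi m t.
Proof.
by have := hpi.1 t m k; rewrite /premium_margin /exp_lost_frac; lra.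
Qed.

Lemma premium_margin_le0 (k : 'I_K) t : premium_margin pi k t <= 0.
Proof. by rewrite subr_le0; exact: (hpi.2 t k).2. Qed.

End Conditions.

Lemma premium_conditions_valid pi :
  (forall i t, 0 <= D i t) ->
  premium_conditions P D V r p Theta pi -> valid_contract P D typ V r p Theta pi.
Proof.
move=> hD hpi i; split.
  rewrite CU_margin gerDl; apply: sumr_le0 => t _.
  exact: mulr_ge0_le0 (hD i t) (premium_margin_le0 hpi _ _).
move=> m; rewrite !CU_margin.
by under eq_bigr => t _ do rewrite (premium_margin_indep hpi t m (typ i)).
Qed.

Lemma premium_conditions_exist :
  (forall t (k m : 'I_K), (k <= m)%N -> V k t <= V m t) ->
  (forall t (k : 'I_K), (nat_of_ord k = 0)%N -> p <= V k t) ->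
  exists pi, premium_conditions P D V r p Theta pi.
Proof.
case: K typ V => [|K'] typ' V' hVmono hp.
  by exists (fun _ _ => 0); split => t [].
exists (fun k t => (V' k t - V' ord0 t) * exp_lost_frac t); split => t k /=.
  by move=> k'; rewrite /exp_lost_frac /lost_frac; ring.
split; first by rewrite mulr_ge0 ?exp_lost_frac_ge0 // subr_ge0 hVmono.
by rewrite ler_wpM2r ?exp_lost_frac_ge0 // lerD2l lerN2 hp.
Qed.

End Contract.

Theorem theorem1 (d : measure_display) (T : measurableType d) (R : realType)
  (P : probability T R) (I Tt : finType) (K : nat)
  (D : I -> Tt -> R) (typ : I -> 'I_K) (V : 'I_K -> Tt -> R)
  (r p : R) (Theta : Tt -> T -> R)
  (hD : forall i t, 0 <= D i t)
  (hDa : forall t, 0 < Dagg D t)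
  (hVmono : forall t (k m : 'I_K), (k <= m)%N -> V k t <= V m t)
  (hr : 0 <= r)
  (hTheta_meas : forall t, measurable_fun setT (Theta t))
  (hTheta_01 : forall t w, 0 <= Theta t w <= 1)
  (hp : forall t (k : 'I_K), (nat_of_ord k = 0)%N -> p <= V k t) :
  (forall pi : 'I_K -> Tt -> R,
      premium_conditions P D V r p Theta pi ->
      valid_contract P D typ V r p Theta pi)
  /\ exists pi : 'I_K -> Tt -> R, premium_conditions P D V r p Theta pi.
Proof.
split; last exact: premium_conditions_exist.
by move=> pi; apply: premium_conditions_valid.
Qed.
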